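(* Suppose the underlying undirected graph of $G$ is a tree (so $m=n$ and the reduced incidence matrix $B$ is an invertible $n\times n$ matrix). Fix $s\in\mathbb C^n$. Then (1) $\hat h(\mathbb X(s))=\hat{\mathbb Y}(s)$; and (2) for every $\hat y\in\hat{\mathbb Y}(s)$, the vector $\theta_*:=\mathcal P(B^{-1}\beta(\hat y))$ is the unique vector in $(-\pi,\pi]^n$ such that $h_{\theta_*}(\hat y)\in\mathbb X(s)$.
   Context: $G=(N,E)$ is a directed graph with nodes $N=\{0,1,\dots,n\}$ and $m=|E|$ links; $(i,j)\in E$ denotes a link from $i$ to $j$. Each link has impedance $z_{ij}=r_{ij}+\mathbf{i}x_{ij}$, each node $i$ shunt admittance $y_i=g_i-\mathbf{i}b_i$. The voltage $V_0$ at node 0 is given and taken as angle reference: $V_0=|V_0|$ real and positive; $v_0:=|V_0|^2$. $\mathbb X(s)$ is the set of $x=(S,I,V,s_0)$ with $S,I\in\mathbb C^E$, $V=(V_1,\dots,V_n)$, $s_0\in\mathbb C$ satisfying $V_i-V_j=z_{ij}I_{ij}$, $S_{ij}=V_iI_{ij}^*$ for $(i,j)\in E$, and $\sum_{k:(j,k)\in E}S_{jk}-\sum_{i:(i,j)\in E}(S_{ij}-z_{ij}|I_{ij}|^2)+y_j^*|V_j|^2=s_j$ for $j\in N$. $\hat{\mathbb Y}(s)$ is the set of real $\hat y=(P,Q,\ell,v,p_0,q_0)$ ($P,Q,\ell$ indexed by $E$, $v=(v_1,\dots,v_n)$), with $S_{ij}:=P_{ij}+\mathbf{i}Q_{ij}$,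 $s_j=p_j+\mathbf{i}q_j$, satisfying $p_j=\sum_{k:(j,k)\in E}P_{jk}-\sum_{i:(i,j)\in E}(P_{ij}-r_{ij}\ell_{ij})+g_jv_j$, $q_j=\sum_{k:(j,k)\in E}Q_{jk}-\sum_{i:(i,j)\in E}(Q_{ij}-x_{ij}\ell_{ij})+b_jv_j$ for $j\in N$, and $v_j=v_i-2(r_{ij}P_{ij}+x_{ij}Q_{ij})+(r_{ij}^2+x_{ij}^2)\ell_{ij}$, $\ell_{ij}=(P_{ij}^2+Q_{ij}^2)/v_i$ for $(i,j)\in E$. Projection: $\hat h(S,I,V,s_0)=(\mathrm{Re}\,S,\mathrm{Im}\,S,(|I_{ij}|^2)_{(i,j)\in E},(|V_i|^2)_{i=1}^n,\mathrm{Re}\,s_0,\mathrm{Im}\,s_0)$. Inverse projection for $\theta\in(-\pi,\pi]^n$ (with $\theta_0:=0$): $h_\theta(\hat y)=(S,I,V,s_0)$ with $S_{ij}=P_{ij}+\mathbf{i}Q_{ij}$, $I_{ij}=\sqrt{\ell_{ij}}e^{\mathbf{i}(\theta_i-\angle S_{ij})}$, $V_i=\sqrt{v_i}e^{\mathbf{i}\theta_i}$, $s_0=p_0+\mathbf{i}q_0$. $B$ is the reduced incidence matrix: $B_{ei}=1$ if link $e$ leaves node $i$, $-1$ if it enters $i$, $0$ otherwise ($e\in E$, $i=1,\dots,n$). $\beta(\hat y)\in(-\pi,\pi]^m$ has entries $\beta_{ij}=\angle(v_i-z_{ij}^*S_{ij})$. $\mathcal P$ reduces each component modulo $2\pi$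 into $(-\pi,\pi]$. *)

From HB Require Import structures.
From mathcomp Require Import all_boot all_order all_algebra.
From mathcomp Require Import complex.
From mathcomp Require Import reals trigo.

Set Implicit Arguments.
Unset Strict Implicit.
Unset Printing Implicit Defensive.

Import Order.TTheory GRing.Theory Num.Theory.
Local Open Scope ring_scope.
Local Open Scope complex_scope.

(* Graph.  Nodes are 'I_n.+1 (node 0 is the slack node); links are    *)
(* indexed by a finite type 'I_m, link e goes from [tl e] to [hd e].   *)

Section Graph.
Variables (n m : nat) (tl hd : 'I_m -> 'I_n.+1).

Definition uadj : rel 'I_n.+1 := fun u v =>
  [exists e : 'I_m, ((tl e == u) && (hd e == v)) || ((tl e == v) && (hd e == u))].

Definition ujoins (e : 'I_m) (u v : 'I_n.+1) : Prop :=
  (tl e = u /\ hd e = v) \/ (tl e = v /\ hd e = u).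

(* a cycle of the underlying undirected multigraph: k+1 distinct links and
   k+1 distinct nodes u_0 .. u_k, link f t joining u_t and u_(t+1 mod k+1)
   (k = 0 : self loop, k = 1 : two parallel links) *)
Definition ucycle_exists : Prop :=
  exists (k : nat) (f : 'I_k.+1 -> 'I_m) (u : 'I_k.+1 -> 'I_n.+1),
    injective f /\ injective u /\ forall t, ujoins (f t) (u t) (u (ordS t)).

Definition is_tree : Prop :=
  (forall u v : 'I_n.+1, connect uadj u v) /\ ~ ucycle_exists.
End Graph.

Section Aux.
Variable R : realType.

Definition cRe (z : R[i]) : R := let: a +i* _ := z in a.
Definition cIm (z : R[i]) : R := let: _ +i* b := z in b.

Definition cabs (z : R[i]) : R := Num.sqrt (cRe z ^+ 2 + cIm z ^+ 2).

Definition expi (t : R) : R[i] := cos t +i* sin t.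

(* principal argument, with values in (-pi, pi]; convention angle 0 = 0 *)
Definition carg (z : R[i]) : R :=
  if z == 0 then 0
  else if 0 <= cIm z then acos (cRe z / cabs z)
  else - acos (cRe z / cabs z).

(* reduction modulo 2 pi into (-pi, pi] :
   P t = t - 2 pi k with k the unique integer with t - 2 pi k in (-pi, pi] *)
Definition Pmod (t : R) : R :=
  t - 2 * pi * (Num.ceil ((t - pi) / (2 * pi)))%:~R.

Definition in_range (n : nat) (th : 'I_n -> R) : Prop :=
  forall i, - pi < th i /\ th i <= pi.

(* extension of a vector indexed by nodes 1..n to nodes 0..n *)
Definition ext (T : Type) (n : nat) (a0 : T) (a : 'I_n -> T) (j : 'I_n.+1) : T :=
  match unlift ord0 j with None => a0 | Some i => a i end.
End Aux.

Record xvar (R : realType) (n m : nat) := XVar {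
  xS : 'I_m -> R[i]; xI : 'I_m -> R[i]; xV : 'I_n -> R[i]; xs0 : R[i] }.

Record yvar (R : realType) (n m : nat) := YVar {
  yP : 'I_m -> R; yQ : 'I_m -> R; yl : 'I_m -> R; yv : 'I_n -> R;
  yp0 : R; yq0 : R }.

Section Model.
Variables (R : realType) (n m : nat) (tl hd : 'I_m -> 'I_n.+1).
Variables (r x : 'I_m -> R) (g b : 'I_n.+1 -> R) (V0 : R).
(* V0 = |V_0| > 0, v_0 = V0^2 ; s = (s_1, ..., s_n) *)
Variable s : 'I_n -> R[i].

Definition zimp (e : 'I_m) : R[i] := r e +i* x e.
Definition yshunt_conj (j : 'I_n.+1) : R[i] := g j +i* b j.

Definition inX (X : xvar R n m) : Prop :=
  let Vf := ext (V0%:C) (xV X) in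
  let sf := ext (xs0 X) s in
  (forall i, xV X i != 0) /\
  (forall e, Vf (tl e) - Vf (hd e) = zimp e * xI X e) /\
  (forall e, xS X e = Vf (tl e) * (xI X e)^*) /\
  (forall j : 'I_n.+1,
     \sum_(e < m | tl e == j) xS X e
     - \sum_(e < m | hd e == j) (xS X e - zimp e * ((cabs (xI X e)) ^+ 2)%:C)
     + yshunt_conj j * ((cabs (Vf j)) ^+ 2)%:C = sf j).

Definition inY (Y : yvar R n m) : Prop :=
  let vf := ext (V0 ^+ 2) (yv Y) in
  let pf := ext (yp0 Y) (fun i => cRe (s i)) in
  let qf := ext (yq0 Y) (fun i => cIm (s i)) in
  (forall i, 0 < yv Y i) /\
  (forall j : 'I_n.+1,
     pf j = \sum_(e < m | tl e == j) yP Y e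
            - \sum_(e < m | hd e == j) (yP Y e - r e * yl Y e) + g j * vf j) /\
  (forall j : 'I_n.+1,
     qf j = \sum_(e < m | tl e == j) yQ Y e
            - \sum_(e < m | hd e == j) (yQ Y e - x e * yl Y e) + b j * vf j) /\
  (forall e, vf (hd e) = vf (tl e) - 2 * (r e * yP Y e + x e * yQ Y e)
                         + (r e ^+ 2 + x e ^+ 2) * yl Y e) /\
  (forall e, yl Y e = (yP Y e ^+ 2 + yQ Y e ^+ 2) / vf (tl e)).

Definition hhat (X : xvar R n m) : yvar R n m :=
  YVar (fun e => cRe (xS X e)) (fun e => cIm (xS X e))
       (fun e => cabs (xI X e) ^+ 2) (fun i => cabs (xV X i) ^+ 2)
       (cRe (xs0 X)) (cIm (xs0 X)).

Definition htheta (th : 'I_n -> R) (Y : yvar R n m) : xvar R n m :=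
  let thf := ext 0 th in
  let Sf := fun e => yP Y e +i* yQ Y e in
  XVar Sf
       (fun e => (Num.sqrt (yl Y e))%:C * expi (thf (tl e) - carg (Sf e)))
       (fun i => (Num.sqrt (yv Y i))%:C * expi (th i))
       (yp0 Y +i* yq0 Y).

Definition beta (Y : yvar R n m) (e : 'I_m) : R :=
  let vf := ext (V0 ^+ 2) (yv Y) in
  carg ((vf (tl e))%:C - (zimp e)^* * (yP Y e +i* yQ Y e)).
End Model.

(* reduced incidence matrix B (rows: links, columns: nodes 1..n) *)
Definition incB (R : realType) (n m : nat) (tl hd : 'I_m -> 'I_n.+1) : 'M[R]_(m, n) :=
  \matrix_(e < m, i < n)
     (if tl e == lift ord0 i then 1 else if hd e == lift ord0 i then -1 else 0).

Definition theta_star (R : realType) (n : nat) (tl hd : 'I_n -> 'I_n.+1)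
    (r x : 'I_n -> R) (V0 : R) (Y : yvar R n n) (i : 'I_n) : R :=
  Pmod ((invmx (incB R tl hd) *m \col_e beta tl r x V0 Y e) i 0).

From HB Require Import structures.
From mathcomp Require Import all_boot all_order all_algebra.
From mathcomp Require Import complex.
From mathcomp Require Import boolp reals trigo.
From mathcomp Require Import ring lra.

Set Implicit Arguments.
Unset Strict Implicit.
Unset Printing Implicit Defensive.

Import Order.TTheory GRing.Theory Num.Theory.
Local Open Scope ring_scope.
Local Open Scope complex_scope.

(* For x in X(s), the power balance of hhat(x) is the real and imaginary part
   of that of x, and expanding |V_j|^2 = |V_i - z I|^2 with S = V_i I^* gives
   the voltage-drop equation.  Conversely, for yhat in Yhat(s) the point
   h_theta(yhat) satisfies every equation of X(s) except possibly Ohm's law;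
   since the voltage-drop equation says |v_i - z^* S| = sqrt(v_i v_j), Ohm's
   law on link (i,j) holds iff theta_i - theta_j = beta_ij modulo 2 pi.  On a
   tree B is invertible, and two solutions of B theta = beta (mod 2 pi) agree
   modulo 2 pi at every node by propagation from the root, so P(B^-1 beta) is
   the only solution in (-pi, pi]^n. *)

Section ComplexPolar.
Variable R : realType.
Implicit Types (a c t : R) (z w : R[i]).

Lemma cabsE z : (cabs z)%:C = `|z|.
Proof. by rewrite normc_def; case: z. Qed.

Lemma cabs_sq z : cabs z ^+ 2 = cRe z ^+ 2 + cIm z ^+ 2.
Proof. by rewrite sqr_sqrtr // addr_ge0 // sqr_ge0. Qed.

Lemma cabs_ge0 z : 0 <= cabs z.
Proof. exact: sqrtr_ge0. Qed.

Lemma cabs_eq0 z : (cabs z == 0) = (z == 0).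
Proof. by rewrite -(inj_eq (@complexI R)) cabsE normr_eq0. Qed.

Lemma cabsM z w : cabs (z * w) = cabs z * cabs w.
Proof. by apply: (@complexI R); rewrite rmorphM /= !cabsE normrM. Qed.

Lemma cabs_real a : cabs a%:C = `|a|.
Proof. by rewrite /cabs /= expr0n addr0 sqrtr_sqr. Qed.

Lemma real_complex_neq0 a : a != 0 -> a%:C != 0 :> R[i].
Proof. by rewrite (inj_eq (@complexI R)). Qed.

Lemma conj_real_complex a : (a%:C)^*%R = a%:C :> R[i].
Proof. exact: conjc_real. Qed.

Lemma cabs_conj z : cabs z^*%R = cabs z.
Proof. by case: z => a c; rewrite /cabs /= sqrrN. Qed.

Lemma ceqP z w : z = w <-> cRe z = cRe w /\ cIm z = cIm w.
Proof. by case: z; case: w => ? ? ? ?; split => [[-> ->]|[/= -> ->]]. Qed.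

Lemma cReD z w : cRe (z + w) = cRe z + cRe w. Proof. by case: z; case: w. Qed.
Lemma cImD z w : cIm (z + w) = cIm z + cIm w. Proof. by case: z; case: w. Qed.
Lemma cReB z w : cRe (z - w) = cRe z - cRe w. Proof. by case: z; case: w. Qed.
Lemma cImB z w : cIm (z - w) = cIm z - cIm w. Proof. by case: z; case: w. Qed.

Lemma cReMr z a : cRe (z * a%:C) = cRe z * a.
Proof. by case: z => ? ? /=; rewrite mulr0 subr0. Qed.

Lemma cImMr z a : cIm (z * a%:C) = cIm z * a.
Proof. by case: z => ? ? /=; rewrite mulr0 add0r. Qed.

Lemma cRe_sum (I : finType) (P : pred I) (F : I -> R[i]) :
  cRe (\sum_(i | P i) F i) = \sum_(i | P i) cRe (F i).
Proof. exact: (big_morph _ cReD). Qed.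

Lemma cIm_sum (I : finType) (P : pred I) (F : I -> R[i]) :
  cIm (\sum_(i | P i) F i) = \sum_(i | P i) cIm (F i).
Proof. exact: (big_morph _ cImD). Qed.

Lemma expiD a c : expi (a + c) = expi a * expi c.
Proof. by rewrite /expi cosD sinD; congr (_ +i* _); ring. Qed.

Lemma expi0 : expi 0 = 1 :> R[i].
Proof. by rewrite /expi cos0 sin0. Qed.

Lemma cabs_expi t : cabs (expi t) = 1.
Proof. by rewrite /cabs /= cos2Dsin2 sqrtr1. Qed.

Lemma expi_neq0 t : expi t != 0.
Proof. by rewrite -cabs_eq0 cabs_expi oner_eq0. Qed.

Lemma expiN t : expi (- t) = (expi t)^-1.
Proof.
apply: (mulfI (expi_neq0 t)).
by rewrite -expiD subrr expi0 divff ?expi_neq0.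
Qed.

Lemma conj_expi t : (expi t)^*%R = (expi t)^-1.
Proof. by rewrite -expiN /expi cosN sinN. Qed.

Lemma expiB a c : expi (a - c) = expi a / expi c.
Proof. by rewrite expiD expiN. Qed.

Lemma expi_2pi_periodic t (k : int) : expi (t + 2 * pi * k%:~R) = expi t.
Proof.
have expi_2pin (m : nat) (u : R) : expi (u + 2 * pi * m%:R) = expi u.
  have -> : 2 * pi * m%:R = (pi *+ 2) *+ m :> R by rewrite mulr_natr mulr_natl.
  by rewrite /expi (periodicn (@cosD2pi R)) (periodicn (@sinD2pi R)).
case: k => m; first exact: expi_2pin.
rewrite NegzE mulrNz.
by rewrite -[LHS](expi_2pin m.+1 (t + 2 * pi * - m.+1%:R)) mulrN addrNK.
Qed.

Lemma carg_cos_sin z : z != 0 ->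
  cos (carg z) = cRe z / cabs z /\ sin (carg z) = cIm z / cabs z.
Proof.
move=> z0; have c_gt0 : 0 < cabs z by rewrite lt_def cabs_eq0 z0 cabs_ge0.
have c_sq := cabs_sq z.
rewrite /carg (negbTE z0); case: z z0 c_gt0 c_sq => a b /= _.
set c := cabs _ => c_gt0 c_sq.
have ac_itv : -1 <= a / c <= 1.
  by rewrite ler_pdivrMr // ler_pdivlMr //; apply/andP; split; nra.
have sin_acos_ac : Num.sqrt (1 - (a / c) ^+ 2) = `|b| / c.
  have -> : 1 - (a / c) ^+ 2 = (b / c) ^+ 2.
    by rewrite !expr_div_n (_ : b ^+ 2 = c ^+ 2 - a ^+ 2); [field; rewrite gt_eqF|lra].
  by rewrite sqrtr_sqr normf_div (gtr0_norm c_gt0).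
have [b_ge0|b_lt0] := lerP 0 b.
  by rewrite acosK ?inE // sin_acos // sin_acos_ac ger0_norm.
by rewrite cosN sinN acosK ?inE // sin_acos // sin_acos_ac ltr0_norm // mulNr opprK.
Qed.

Lemma polar z : z = (cabs z)%:C * expi (carg z).
Proof.
have [->|z0] := eqVneq z 0.
  by rewrite (eqP (_ : cabs 0 == 0)) ?mul0r ?cabs_eq0.
rewrite /expi; have [-> ->] := carg_cos_sin z0.
have c0 : cabs z != 0 by rewrite cabs_eq0.
by case: z z0 c0 => a b _ c0 /=; congr (_ +i* _); field.
Qed.

Lemma carg_expi t : - pi < t <= pi -> carg (expi t) = t.
Proof.
move=> /andP[t_gtNpi t_lepi].
rewrite /carg (negbTE (expi_neq0 t)) cabs_expi divr1 /=.
have [t_ge0|t_lt0] := lerP 0 t.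
  by rewrite sin_ge0_pi ?t_ge0 //; apply: cosK; rewrite in_itv /= t_ge0.
have sin_lt0 : sin t < 0.
  by rewrite -[t]opprK sinN oppr_lt0 sin_gt0_pi // oppr_gt0 t_lt0 ltrNl.
rewrite leNgt sin_lt0 /= cosKN ?opprK // (ltW t_lt0) andbT; lra.
Qed.

Lemma expi_inj a c : - pi < a <= pi -> - pi < c <= pi -> expi a = expi c -> a = c.
Proof.
by move=> a_itv c_itv eac; rewrite -(carg_expi a_itv) -(carg_expi c_itv) eac.
Qed.

Lemma Pmod_itv t : - pi < Pmod t <= pi.
Proof.
rewrite /Pmod; set k := Num.ceil _.
have pi_gt0 : (0 : R) < pi := pi_gt0 R.
have := ceil_itv ((t - pi) / (2 * pi)); rewrite -/k intrB => /andP[k_lb k_ub].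
have u2pi : (t - pi) / (2 * pi) * (2 * pi) = t - pi by field; rewrite gt_eqF //; lra.
have lb : (k%:~R - 1) * (2 * pi) < t - pi by rewrite -u2pi ltr_pM2r //; lra.
have ub : t - pi <= k%:~R * (2 * pi) by rewrite -u2pi ler_pM2r //; lra.
by apply/andP; split; nra.
Qed.

Lemma in_range_Pmod (n : nat) (f : 'I_n -> R) : in_range (fun i => Pmod (f i)).
Proof. by move=> i; have /andP[] := Pmod_itv (f i). Qed.

Lemma expi_Pmod t : expi (Pmod t) = expi t.
Proof.
by rewrite /Pmod; set k := Num.ceil _; rewrite -(expi_2pi_periodic t (- k)) intrN mulrN.
Qed.

End ComplexPolar.

Section BranchFlowAlgebra.
Variable R : realType.

Lemma balance_ReIm (I : finType) (P Q : pred I) (S z : I -> R[i]) (l : I -> R)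
    (y w : R[i]) (v : R) :
  \sum_(e | P e) S e - \sum_(e | Q e) (S e - z e * (l e)%:C) + y * v%:C = w <->
  cRe w = \sum_(e | P e) cRe (S e)
          - \sum_(e | Q e) (cRe (S e) - cRe (z e) * l e) + cRe y * v /\
  cIm w = \sum_(e | P e) cIm (S e)
          - \sum_(e | Q e) (cIm (S e) - cIm (z e) * l e) + cIm y * v.
Proof.
rewrite ceqP cReD cImD cReB cImB !cRe_sum !cIm_sum cReMr cImMr.
have -> : \sum_(e | Q e) cRe (S e - z e * (l e)%:C)
          = \sum_(e | Q e) (cRe (S e) - cRe (z e) * l e).
  by apply: eq_bigr => e _; rewrite cReB cReMr.
have -> : \sum_(e | Q e) cIm (S e - z e * (l e)%:C)
          = \sum_(e | Q e) (cIm (S e) - cIm (z e) * l e).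
  by apply: eq_bigr => e _; rewrite cImB cImMr.
by split=> [[<- <-]|[-> ->]].
Qed.

Lemma voltage_drop_sq (V I z : R[i]) :
  cabs (V - z * I) ^+ 2 = cabs V ^+ 2
    - 2 * (cRe z * cRe (V * I^*) + cIm z * cIm (V * I^*))
    + (cRe z ^+ 2 + cIm z ^+ 2) * cabs I ^+ 2.
Proof. by rewrite !cabs_sq; case: V I z => [a b] [c d] [p q] /=; ring. Qed.

Lemma current_sq (V I : R[i]) : V != 0 ->
  cabs I ^+ 2 = (cRe (V * I^*) ^+ 2 + cIm (V * I^*) ^+ 2) / cabs V ^+ 2.
Proof.
move=> V0; rewrite -cabs_sq cabsM cabs_conj exprMn [_ * cabs I ^+ 2]mulrC mulfK //.
by rewrite sqrf_eq0 cabs_eq0.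
Qed.

Lemma cabs_sub_conjM_sq (v : R) (z S : R[i]) : v != 0 ->
  cabs (v%:C - z^* * S) ^+ 2 = v * (v - 2 * (cRe z * cRe S + cIm z * cIm S)
    + (cRe z ^+ 2 + cIm z ^+ 2) * ((cRe S ^+ 2 + cIm S ^+ 2) / v)).
Proof. by move=> v0; rewrite cabs_sq; case: z S => [a b] [c d] /=; field. Qed.

Lemma current_of_flow (S : R[i]) (v t : R) : 0 < v ->
  (Num.sqrt ((cRe S ^+ 2 + cIm S ^+ 2) / v))%:C * expi (t - carg S)
  = S^* * expi t / (Num.sqrt v)%:C.
Proof.
move=> v_gt0; have sv0 : Num.sqrt v != 0 by rewrite gt_eqF ?sqrtr_gt0.
rewrite sqrtrM ?addr_ge0 ?sqr_ge0 // sqrtrV ?ltW // -/(cabs S).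
have -> : S^*%R = (cabs S)%:C * (expi (carg S))^-1.
  by rewrite {1}[S]polar rmorphM /= conj_real_complex conj_expi.
rewrite expiB rmorphM fmorphV.
by field; rewrite real_complex_neq0 ?expi_neq0.
Qed.

Lemma flow_of_current (S : R[i]) (v t : R) : 0 < v ->
  (Num.sqrt v)%:C * expi t * (S^* * expi t / (Num.sqrt v)%:C)^* = S.
Proof.
move=> v_gt0; have sv0 : Num.sqrt v != 0 by rewrite gt_eqF ?sqrtr_gt0.
rewrite !rmorphM fmorphV /= conjCK conj_real_complex conj_expi.
by field; rewrite real_complex_neq0 ?expi_neq0.
Qed.

(* Conjugating Ohm's law and multiplying by p e^(ia) turns it into
   p^2 - z^* S = p q e^(i(a - c)); compare with the polar form of the left side. *)
Lemma ohm_law_polar (p q a c : R) (z S : R[i]) : 0 < p -> 0 < q ->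
  cabs ((p ^+ 2)%:C - z^* * S) = p * q ->
  p%:C * expi a - q%:C * expi c = z * (S^* * expi a / p%:C) <->
  expi (a - c) = expi (carg ((p ^+ 2)%:C - z^* * S)).
Proof.
move=> p_gt0 q_gt0; set w := (p ^+ 2)%:C - _ => w_abs.
have pC0 : p%:C != 0 by rewrite real_complex_neq0 ?gt_eqF.
have qC0 : q%:C != 0 by rewrite real_complex_neq0 ?gt_eqF.
have A0 := expi_neq0 a; have C0 := expi_neq0 c.
rewrite (_ : expi (carg w) = w / (p * q)%:C); last first.
  by rewrite {2}[w]polar w_abs [(p * q)%:C * _]mulrC mulfK // rmorphM mulf_neq0.
rewrite expiB /w rmorphXn /= rmorphM /=.
split=> [ohm | arg].
- have ohm' := congr1 (@Num.conj _) ohm.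
  rewrite rmorphB !rmorphM fmorphV /= !conj_real_complex !conj_expi conjCK in ohm'.
  have -> : z^* * S = (p%:C * (expi a)^-1 - q%:C * (expi c)^-1) * p%:C * expi a.
    by rewrite ohm'; field; rewrite pC0 A0.
  by field; rewrite pC0 qC0 A0 C0.
- have zS : z^* * S = p%:C ^+ 2 - p%:C * q%:C * (expi a / expi c).
    by rewrite arg; field; rewrite pC0 qC0.
  have zS' := congr1 (@Num.conj _) zS.
  rewrite !rmorphB !rmorphM /= fmorphV /= conjCK !conj_real_complex !conj_expi in zS'.
  rewrite mulrA mulrA zS'.
  by field; rewrite pC0 A0 C0.
Qed.

End BranchFlowAlgebra.

Lemma ext0 (T : Type) (n : nat) (a0 : T) (a : 'I_n -> T) : ext a0 a ord0 = a0.
Proof. by rewrite /ext unlift_none. Qed.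

Lemma extS (T : Type) (n : nat) (a0 : T) (a : 'I_n -> T) i :
  ext a0 a (lift ord0 i) = a i.
Proof. by rewrite /ext liftK. Qed.

Lemma ext_map (T U : Type) (f : T -> U) (n : nat) (a0 : T) (a : 'I_n -> T) j :
  f (ext a0 a j) = ext (f a0) (f \o a) j.
Proof. by case: (unliftP ord0 j) => [i ->|->]; rewrite ?extS ?ext0. Qed.

Section TreeGraph.
Variables (n m : nat) (tl hd : 'I_m -> 'I_n.+1).

Lemma tree_no_loop e : is_tree tl hd -> tl e != hd e.
Proof.
move=> [_ acyclic]; apply/eqP => loop_e; apply: acyclic.
exists 0%N, (fun _ => e), (fun _ => tl e); split; last split.
- by move=> i j _; rewrite (ord1 i) (ord1 j).
- by move=> i j _; rewrite (ord1 i) (ord1 j).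
- by move=> t; left.
Qed.

Lemma connected_link_ind (P : 'I_n.+1 -> Prop) :
  (forall u v, connect (uadj tl hd) u v) ->
  P ord0 -> (forall e, P (tl e) <-> P (hd e)) -> forall j, P j.
Proof.
move=> connected P0 P_link j; have /connectP [p path_p ->] := connected ord0 j.
elim: p ord0 P0 path_p => [|v p IHp] u Pu //= /andP [uv path_p].
apply: IHp path_p; move: uv => /existsP [e /orP [] /andP [/eqP tl_e /eqP hd_e]].
  by rewrite -hd_e; apply/P_link; rewrite tl_e.
by rewrite -tl_e; apply/P_link; rewrite hd_e.
Qed.

Variable R : realType.

Definition solves_mod2pi (th : 'I_n -> R) (be : 'I_m -> R) : Prop :=
  forall e, expi (ext 0 th (tl e) - ext 0 th (hd e)) = expi (be e).

Lemma sum_lift_indicator (c : 'I_n -> R) j :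
  \sum_i (if j == lift ord0 i then c i else 0) = ext 0 c j.
Proof.
case: (unliftP ord0 j) => [i ->|->]; last by rewrite ext0 big1.
rewrite extS (bigD1 i) //= eqxx big1 ?addr0 // => k k_neq_i.
by rewrite (inj_eq (@lift_inj _ ord0)) eq_sym (negbTE k_neq_i).
Qed.

Lemma incB_mul_col (phi : 'I_n -> R) e : tl e != hd e ->
  (incB R tl hd *m \col_i phi i) e 0 = ext 0 phi (tl e) - ext 0 phi (hd e).
Proof.
move=> no_loop; rewrite !mxE -!sum_lift_indicator -sumrB.
apply: eq_bigr => j _; rewrite !mxE.
case: (tl e =P lift ord0 j) => tl_e; case: (hd e =P lift ord0 j) => hd_e //=.
- by rewrite tl_e hd_e eqxx in no_loop.
- by rewrite mul1r subr0.
- by rewrite mulN1r sub0r.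
- by rewrite mul0r subrr.
Qed.

End TreeGraph.

Section TreePhases.
Variables (R : realType) (n : nat) (tl hd : 'I_n -> 'I_n.+1).
Hypothesis tree : is_tree tl hd.

(* A kernel vector of B is constant along every link, hence equal to its value
   0 at the root. *)
Lemma tree_incB_unitmx : incB R tl hd \in unitmx.
Proof.
rewrite unitmxE unitfE -det_tr; apply/negP => /det0P [v v_neq0 vB0].
have B_v : forall e, ext 0 (fun i => v 0 i) (tl e) - ext 0 (fun i => v 0 i) (hd e) = 0.
  move=> e; rewrite -incB_mul_col ?tree_no_loop //.
  have -> : \col_i v 0 i = v^T by apply/matrixP => i k; rewrite (ord1 k) !mxE.
  by rewrite -[incB _ _ _]trmxK -trmx_mul vB0 !mxE.
have v0 : forall j, ext 0 (fun i => v 0 i) j = 0.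
  apply: (connected_link_ind tree.1); first by rewrite ext0.
  by move=> e; move/eqP: (B_v e); rewrite subr_eq0 => /eqP ->.
move/eqP: v_neq0; apply; apply/matrixP => i j.
by rewrite (ord1 i) mxE -(v0 (lift ord0 j)) extS.
Qed.

Lemma incB_solve (be : 'I_n -> R) :
  let phi i := (invmx (incB R tl hd) *m \col_e be e) i 0 in
  forall e, ext 0 phi (tl e) - ext 0 phi (hd e) = be e.
Proof.
move=> phi e; rewrite -incB_mul_col ?tree_no_loop //.
have -> : \col_i phi i = invmx (incB R tl hd) *m \col_e be e.
  by apply/matrixP => i k; rewrite (ord1 k) mxE.
by rewrite mulKVmx ?tree_incB_unitmx // mxE.
Qed.

Lemma solves_mod2pi_Pmod (th be : 'I_n -> R) :
  solves_mod2pi tl hd th be -> solves_mod2pi tl hd (@Pmod R \o th) be.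
Proof.
have expi_Pmod_ext j : expi (ext 0 (@Pmod R \o th) j) = expi (ext 0 th j).
  by case: (unliftP ord0 j) => [i ->|->]; rewrite ?ext0 ?extS /= ?expi_Pmod.
by move=> th_be e; rewrite expiB !expi_Pmod_ext -expiB th_be.
Qed.

Lemma Pmod_incB_solves_mod2pi (be : 'I_n -> R) :
  solves_mod2pi tl hd
    (fun i => Pmod ((invmx (incB R tl hd) *m \col_e be e) i 0)) be.
Proof. by apply: solves_mod2pi_Pmod => e; rewrite incB_solve. Qed.

Lemma solves_mod2pi_uniq (th th' be : 'I_n -> R) :
  in_range th -> in_range th' ->
  solves_mod2pi tl hd th be -> solves_mod2pi tl hd th' be ->
  th = th'.
Proof.
move=> th_itv th'_itv th_be th'_be.
have same_expi : forall j, expi (ext 0 th j) = expi (ext 0 th' j).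
  apply: (connected_link_ind tree.1); first by rewrite !ext0.
  move=> e; have := th_be e; rewrite -th'_be !expiB => same_ratio.
  split=> same_node.
    by move: same_ratio; rewrite same_node => /(mulfI (expi_neq0 _)) /invr_inj.
  by move: same_ratio; rewrite same_node => /(mulIf (invr_neq0 (expi_neq0 _))).
apply: funext => i; have := same_expi (lift ord0 i); rewrite !extS.
have [lb ub] := th_itv i; have [lb' ub'] := th'_itv i.
by apply: expi_inj; rewrite ?lb ?ub ?lb' ?ub'.
Qed.

End TreePhases.

Section PowerFlow.
Variables (R : realType) (n m : nat) (tl hd : 'I_m -> 'I_n.+1).
Variables (r x : 'I_m -> R) (g b : 'I_n.+1 -> R) (V0 : R) (s : 'I_n -> R[i]).
Hypothesis V0_gt0 : 0 < V0.

Local Notation inX := (inX tl hd r x g b V0 s).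
Local Notation inY := (inY tl hd r x g b V0 s).

Lemma inY_hhat X : inX X -> inY (hhat X).
Proof.
move=> [V_neq0 [ohm [flow balance]]].
set Vf := ext V0%:C (xV X).
have Vf_neq0 j : Vf j != 0.
  case: (unliftP ord0 j) => [i ->|->]; rewrite /Vf ?extS ?ext0 //.
  by rewrite (inj_eq (@complexI R)) gt_eqF.
have vfE j : ext (V0 ^+ 2) (yv (hhat X)) j = cabs (Vf j) ^+ 2.
  case: (unliftP ord0 j) => [i ->|->]; rewrite /Vf ?extS ?ext0 //.
  by rewrite cabs_real gtr0_norm.
split; [|split; [|split; [|split]]] => /=.
- by move=> i; rewrite exprn_gt0 // lt_def cabs_eq0 V_neq0 cabs_ge0.
- move=> j; have [re _] := (balance_ReIm _ _ _ _ _ _ _ _).1 (balance j).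
  by rewrite vfE; move: re; rewrite (ext_map (@cRe R)); apply.
- move=> j; have [_ im] := (balance_ReIm _ _ _ _ _ _ _ _).1 (balance j).
  by rewrite vfE; move: im; rewrite (ext_map (@cIm R)); apply.
- move=> e; rewrite !vfE.
  have -> : Vf (hd e) = Vf (tl e) - zimp r x e * xI X e.
    by rewrite -ohm opprB addrC subrK.
  by rewrite voltage_drop_sq -flow.
- by move=> e; rewrite vfE flow -current_sq ?Vf_neq0.
Qed.

Section FromY.
Variable Y : yvar R n m.
Hypothesis Y_in : inY Y.

Local Notation vf := (ext (V0 ^+ 2) (yv Y)).
Local Notation Sf e := (yP Y e +i* yQ Y e).

Lemma vf_gt0 j : 0 < vf j.
Proof.
case: (unliftP ord0 j) => [i ->|->]; rewrite ?extS ?ext0 ?exprn_gt0 //.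
exact: Y_in.1.
Qed.

Lemma yl_ge0 e : 0 <= yl Y e.
Proof.
have [_ [_ [_ [_ ->]]]] := Y_in.
by rewrite divr_ge0 ?addr_ge0 ?sqr_ge0 ?ltW ?vf_gt0.
Qed.

Lemma htheta_voltage th j :
  ext V0%:C (xV (htheta tl th Y)) j = (Num.sqrt (vf j))%:C * expi (ext 0 th j).
Proof.
case: (unliftP ord0 j) => [i ->|->]; rewrite ?extS ?ext0 //.
by rewrite expi0 mulr1 sqrtr_sqr gtr0_norm.
Qed.

Lemma htheta_current th e :
  xI (htheta tl th Y) e
  = (Sf e)^* * expi (ext 0 th (tl e)) / (Num.sqrt (vf (tl e)))%:C.
Proof.
have [_ [_ [_ [_ ylE]]]] := Y_in.
by rewrite /= ylE; apply: (current_of_flow (Sf e)); apply: vf_gt0.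
Qed.

Lemma cabs_htheta_current th e : cabs (xI (htheta tl th Y) e) ^+ 2 = yl Y e.
Proof.
by rewrite cabsM cabs_expi mulr1 cabs_real ger0_norm ?sqr_sqrtr ?sqrtr_ge0 ?yl_ge0.
Qed.

Lemma cabs_htheta_voltage th j :
  cabs (ext V0%:C (xV (htheta tl th Y)) j) ^+ 2 = vf j.
Proof.
rewrite htheta_voltage cabsM cabs_expi mulr1 cabs_real.
by rewrite ger0_norm ?sqr_sqrtr ?sqrtr_ge0 ?ltW ?vf_gt0.
Qed.

Lemma hhat_htheta th : hhat (htheta tl th Y) = Y.
Proof.
have -> : Y = YVar (yP Y) (yQ Y) (yl Y) (yv Y) (yp0 Y) (yq0 Y) by case: (Y).
congr YVar; apply: funext => k; first exact: cabs_htheta_current.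
by have := cabs_htheta_voltage th (lift ord0 k); rewrite !extS.
Qed.

(* This is the voltage-drop equation of Yhat. *)
Lemma cabs_beta_arg e :
  cabs ((vf (tl e))%:C - (zimp r x e)^* * Sf e)
  = Num.sqrt (vf (tl e)) * Num.sqrt (vf (hd e)).
Proof.
have [_ [_ [_ [dropE ylE]]]] := Y_in.
rewrite -sqrtrM ?ltW ?vf_gt0 // -[LHS]ger0_norm ?cabs_ge0 // -sqrtr_sqr.
by rewrite cabs_sub_conjM_sq ?gt_eqF ?vf_gt0 // dropE ylE.
Qed.

Lemma htheta_ohm_iff th e :
  let X := htheta tl th Y in
  ext V0%:C (xV X) (tl e) - ext V0%:C (xV X) (hd e) = zimp r x e * xI X e <->
  expi (ext 0 th (tl e) - ext 0 th (hd e)) = expi (beta tl r x V0 Y e).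
Proof.
move=> X; rewrite /X !htheta_voltage htheta_current /beta.
rewrite -[in W in (W%:C - _)](@sqr_sqrtr _ (vf (tl e))) ?ltW ?vf_gt0 //.
apply: ohm_law_polar; rewrite ?sqrtr_gt0 ?vf_gt0 ?sqr_sqrtr ?ltW ?vf_gt0 //.
exact: cabs_beta_arg.
Qed.

Lemma htheta_inX_iff th :
  inX (htheta tl th Y) <-> solves_mod2pi tl hd th (beta tl r x V0 Y).
Proof.
split=> [[_ [ohm _]] e | sol]; first exact/htheta_ohm_iff/ohm.
have [_ [bal_Re [bal_Im _]]] := Y_in.
split; [|split; [|split]].
- move=> i; rewrite /= mulf_neq0 ?expi_neq0 // real_complex_neq0 //.
  by rewrite gt_eqF ?sqrtr_gt0 ?Y_in.1.
- by move=> e; apply/htheta_ohm_iff/sol.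
- by move=> e; rewrite htheta_voltage htheta_current flow_of_current ?vf_gt0.
- move=> j; rewrite cabs_htheta_voltage.
  under [in X in _ - X]eq_bigr do rewrite cabs_htheta_current.
  apply/balance_ReIm; split.
  + by rewrite (ext_map (@cRe R)) bal_Re.
  + by rewrite (ext_map (@cIm R)) bal_Im.
Qed.

End FromY.
End PowerFlow.

Local Close Scope complex_scope.

Theorem theorem3 (R : realType) (n : nat) (tl hd : 'I_n -> 'I_n.+1)
    (r x : 'I_n -> R) (g b : 'I_n.+1 -> R) (V0 : R) (s : 'I_n -> R[i]) :
  is_tree tl hd -> 0 < V0 ->
  ((forall X, inX tl hd r x g b V0 s X -> inY tl hd r x g b V0 s (hhat X)) /\
   (forall Y, inY tl hd r x g b V0 s Y ->
      exists X, inX tl hd r x g b V0 s X /\ hhat X = Y)) /\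
  (forall Y, inY tl hd r x g b V0 s Y ->
     let th := theta_star tl hd r x V0 Y in
     in_range th /\ inX tl hd r x g b V0 s (htheta tl th Y) /\
     (forall th' : 'I_n -> R, in_range th' ->
        inX tl hd r x g b V0 s (htheta tl th' Y) -> th' = th)).
Proof.
move=> tree V0_gt0; split; first split.
- exact: inY_hhat.
- move=> Y Y_in; exists (htheta tl (theta_star tl hd r x V0 Y) Y).
  split; last exact: (hhat_htheta V0_gt0 Y_in).
  by apply/(htheta_inX_iff V0_gt0 Y_in)/Pmod_incB_solves_mod2pi.
- move=> Y Y_in th; have th_sol : solves_mod2pi tl hd th (beta tl r x V0 Y).
    exact: Pmod_incB_solves_mod2pi.
  split; [exact: in_range_Pmod | split; first exact/(htheta_inX_iff V0_gt0 Y_in)].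
  move=> th' th'_itv /(htheta_inX_iff V0_gt0 Y_in) th'_sol.
  exact: (solves_mod2pi_uniq tree th'_itv (in_range_Pmod _) th'_sol th_sol).
Qed.
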